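(* For every positive integer $k$ there exists a nonzero integer $s$ such that, for every $1\le i\le k$, $s^2$ can be written as a sum of $i$ squares of nonzero integers. *)

From Stdlib Require Import ZArith List.
Open Scope Z_scope.

Definition sum_sq (l : list Z) : Z := fold_right (fun x acc => x * x + acc) 0 l.

(* Induction on k with s = 5^k.  Given s^2 as a sum of i nonzero squares
   x_1^2 + ... + x_i^2, the identity 5^2 = 3^2 + 4^2 writes (5s)^2 as
   (3x_1)^2 + (4x_1)^2 + (5x_2)^2 + ... + (5x_i)^2, a sum of i + 1 nonzero
   squares, while (5s)^2 is trivially a sum of one. *)
From Stdlib Require Import ZArith List Lia.
Open Scope Z_scope.

Definition sum_of_nonzero_squares (n : Z) (i : nat) : Prop :=
  exists l : list Z, length l = i /\ Forall (fun x => x <> 0) l /\ n = sum_sq l.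

Lemma sum_sq_map_mul (c : Z) (l : list Z) :
  sum_sq (map (Z.mul c) l) = c * c * sum_sq l.
Proof.
  induction l as [|x l IH]; cbn [map sum_sq fold_right]; [ring|].
  fold (sum_sq l) (sum_sq (map (Z.mul c) l)); rewrite IH; ring.
Qed.

Lemma Forall_nonzero_map_mul (c : Z) (l : list Z) :
  c <> 0 -> Forall (fun x => x <> 0) l -> Forall (fun x => x <> 0) (map (Z.mul c) l).
Proof.
  intros Hc Hl; apply Forall_map; apply Forall_impl with (2 := Hl); intros; lia.
Qed.

Lemma sum_of_nonzero_squares_square (s : Z) :
  s <> 0 -> sum_of_nonzero_squares (s * s) 1.
Proof.
  intros Hs; exists (s :: nil); split; [reflexivity|]; split.
  - now repeat constructor.
  - cbn; ring.
Qed.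

Lemma sum_of_nonzero_squares_pythagorean (a b c n : Z) (i : nat) :
  b <> 0 -> c <> 0 -> a * a = b * b + c * c ->
  sum_of_nonzero_squares n (S i) -> sum_of_nonzero_squares (a * a * n) (S (S i)).
Proof.
  intros Hb Hc Habc [[|x rest] [Hlen [Hnz Hn]]]; [discriminate|].
  inversion Hnz as [|? ? Hx Hrest]; subst.
  assert (Ha : a <> 0) by nia.
  exists (b * x :: c * x :: map (Z.mul a) rest); split; [|split].
  - cbn in *; rewrite length_map; lia.
  - constructor; [lia|]; constructor; [lia|].
    now apply Forall_nonzero_map_mul.
  - cbn [sum_sq fold_right] in *; fold (sum_sq rest) (sum_sq (map (Z.mul a) rest)).
    rewrite sum_sq_map_mul; nia.
Qed.

Theorem lemma7p2 : forall k : nat, (1 <= k)%nat ->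
  exists s : Z, s <> 0 /\
    forall i : nat, (1 <= i <= k)%nat ->
      exists l : list Z, length l = i /\ Forall (fun x => x <> 0) l /\
        s * s = sum_sq l.
Proof.
  intros k _; induction k as [|k [s [Hs IH]]].
  - exists 1; split; [lia|]; intros i Hi; lia.
  - exists (5 * s); split; [lia|].
    intros [|[|i]] Hi; [lia| |].
    + now apply sum_of_nonzero_squares_square; lia.
    + replace (5 * s * (5 * s)) with (5 * 5 * (s * s)) by ring.
      apply (sum_of_nonzero_squares_pythagorean 5 3 4); [lia | lia | reflexivity |].
      apply IH; lia.
Qed.
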